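(* Let $f,g\in L^2(\mathbb{R})$ and write $V=V(f,g)=U+iW$ with $U,W$ real-valued. Assume that $V\in C^3(\mathbb{R}^2,\mathbb{R}^2)$, that $V(x_0,\omega_0)=0$, and that $\det J_V(x_0,\omega_0)\neq 0$, where \[ J_V(x_0,\omega_0)=\begin{pmatrix} U_x(x_0,\omega_0) & U_\omega(x_0,\omega_0)\\ W_x(x_0,\omega_0) & W_\omega(x_0,\omega_0)\end{pmatrix}. \] Let $\psi(x,\omega)=\arg V(x,\omega)$ denote a (local differentiable) phase of $V$. Then $\lim_{x\to x_0}\frac{\partial\psi}{\partial x}(x,\omega_0)=c$ for some real number $c\in\mathbb{R}$.
   Context: The short-time Fourier transform is $V(f,g)(x,\omega)=\int_{\mathbb{R}} f(t)\overline{g(t-x)}e^{-2\pi i\omega t}\,dt$, regarded as a map $\mathbb{R}^2\to\mathbb{R}^2\cong\mathbb{C}$; $C^k$ refers to real differentiability in $(x,\omega)$ and subscripts denote partial derivatives. At points where $V\neq 0$, a differentiable phase $\psi$ with $V=|V|e^{i\psi}$ exists locally, is unique up to an additive constant in $2\pi\mathbb{Z}$, and its partial derivative is $\frac{\partial\psi}{\partial x}=\frac{U W_x-W U_x}{U^2+W^2}$ (independent of the choice of phase). *)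

From HB Require Import structures.
From mathcomp Require Import all_boot all_order all_algebra.
From mathcomp Require Import all_classical all_reals all_analysis.
Set Implicit Arguments. Unset Strict Implicit. Unset Printing Implicit Defensive.
Import Order.TTheory GRing.Theory Num.Theory.
Import numFieldNormedType.Exports.
Local Open Scope classical_set_scope.
Local Open Scope ring_scope.

(* A complex-valued function R -> C is represented by its real and imaginary
   parts (fr, fi). *)

Definition L2c (R : realType) (fr fi : R -> R) : Prop :=
  measurable_fun [set: R] fr /\ measurable_fun [set: R] fi /\
  (\int[@lebesgue_measure R]_(t in [set: R]) ((fr t ^+ 2 + fi t ^+ 2)%:E) < +oo)%E.

(* f(t) * conj(g(t-x)) = ar + i ai *)
Definition stft_ar (R : realType) (fr fi gr gi : R -> R) (x t : R) : R :=
  fr t * gr (t - x) + fi t * gi (t - x).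
Definition stft_ai (R : realType) (fr fi gr gi : R -> R) (x t : R) : R :=
  fi t * gr (t - x) - fr t * gi (t - x).

(* V(f,g)(x,w) = int f(t) conj(g(t-x)) e^{-2 pi i w t} dt = U + i W,
   with e^{-2 pi i w t} = cos(2 pi w t) - i sin(2 pi w t). *)
Definition stftU (R : realType) (fr fi gr gi : R -> R) (x w : R) : R :=
  Rintegral (@lebesgue_measure R) [set: R]
    (fun t => stft_ar fr fi gr gi x t * cos (2 * pi * w * t)
            + stft_ai fr fi gr gi x t * sin (2 * pi * w * t)).
Definition stftW (R : realType) (fr fi gr gi : R -> R) (x w : R) : R :=
  Rintegral (@lebesgue_measure R) [set: R]
    (fun t => stft_ai fr fi gr gi x t * cos (2 * pi * w * t)
            - stft_ar fr fi gr gi x t * sin (2 * pi * w * t)).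

Definition pdx (R : realType) (F : R -> R -> R) : R -> R -> R :=
  fun x w => derive1 (fun y => F y w) x.
Definition pdw (R : realType) (F : R -> R -> R) : R -> R -> R :=
  fun x w => derive1 (fun v => F x v) w.

Definition iterpd (R : realType) (s : seq bool) (F : R -> R -> R) : R -> R -> R :=
  foldr (fun b G => if b then pdx G else pdw G) F s.

(* F is C^k on R^2: all partial derivatives of order <= k exist everywhere
   and are (jointly) continuous.  This is the standard characterization of
   real C^k differentiability. *)
Definition Ck2 (R : realType) (k : nat) (F : R -> R -> R) : Prop :=
  forall s : seq bool, (size s <= k)%N ->
    continuous (fun p : R * R => iterpd s F p.1 p.2) /\
    ((size s < k)%N -> forall x w : R,
        derivable (fun y => iterpd s F y w) x 1 /\
        derivable (fun v => iterpd s F x v) w 1).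

(* d psi / dx for a phase psi of V = U + iW, at points where V <> 0
   (formula independent of the choice of phase). *)
Definition phase_dx (R : realType) (U W : R -> R -> R) (x w : R) : R :=
  (U x w * pdx W x w - W x w * pdx U x w) / (U x w ^+ 2 + W x w ^+ 2).

From HB Require Import structures.
From mathcomp Require Import all_boot all_order all_algebra.
From mathcomp Require Import all_classical all_reals all_analysis.
From mathcomp Require Import ring lra.
Import Order.TTheory GRing.Theory Num.Theory.
Import numFieldNormedType.Exports.
Local Open Scope classical_set_scope.
Local Open Scope ring_scope.

(* Along the line w = w0 write u = U(., w0), w = W(., w0) and h = x - x0.
   Since u and w vanish at x0, dividing numerator and denominator of
   d psi / dx = (u w' - w u') / (u^2 + w^2) by h^2 rewrites it in terms of
   u / h, w / h (tending to u'(x0), w'(x0)) and (u' h - u) / h^2,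
   (w' h - w) / h^2 (tending to u''(x0) / 2, w''(x0) / 2, by l'Hopital).
   The limit of the denominator, u'(x0)^2 + w'(x0)^2, is nonzero because the
   first column of the Jacobian is. *)

Section DifferenceQuotients.
Context {R : realType}.

Lemma is_derive_continuous {f : R -> R} {x df : R} :
  is_derive x (1 : R) f df -> {for x, continuous f}.
Proof.
move=> fdf; apply: differentiable_continuous; apply/derivable1_diffP.
exact: derive.ex_derive.
Qed.

Lemma is_derive_subr_cst (a x : R) : is_derive x (1 : R) (fun y => y - a) 1.
Proof.
have := is_deriveB (is_derive_id x (1 : R)) (is_derive_cst a x 1).
by rewrite subr0.
Qed.

Lemma cvg_subr_cst (a : R) : (x - a) @[x --> a] --> 0.
Proof. by rewrite -(subrr a); apply: cvgB; [exact: cvg_id | exact: cvg_cst]. Qed.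

Lemma mem_itv_center (a : R) : a \in `]a - 1, a + 1[.
Proof. by rewrite in_itv /= ltrDl ltrBlDr ltrDl ltr01. Qed.

Context {u u1 : R -> R} {x0 : R}.
Hypotheses (du : forall x, is_derive x (1 : R) u (u1 x)) (u0 : u x0 = 0).

Lemma cvg_first_order_quotient :
  {for x0, continuous u1} -> (u x / (x - x0)) @[x --> x0^'] --> u1 x0.
Proof.
move=> cu1.
have ux0 : u x @[x --> x0] --> 0 by rewrite -u0; exact: is_derive_continuous (du x0).
apply: (lhopital (mem_itv_center x0) (fun x _ => du x)
  (fun x _ => is_derive_subr_cst x0 x) ux0 (cvg_subr_cst x0)
  (fun x _ => oner_neq0 R)).
by under eq_fun do rewrite divr1.
Qed.

Lemma cvg_second_order_quotient {u2 : R -> R} :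
  (forall x, is_derive x (1 : R) u1 (u2 x)) -> {for x0, continuous u2} ->
  ((u1 x * (x - x0) - u x) / (x - x0) ^+ 2) @[x --> x0^'] --> u2 x0 / 2.
Proof.
move=> du1 cu2.
pose num' y := if y == x0 then u2 x0 else u2 y * (y - x0).
pose den' y := if y == x0 then 2 else 2 * (y - x0) :> R.
have dnum x : x \in `]x0 - 1, x0 + 1[ `\ x0 ->
    is_derive x (1 : R) (fun y => u1 y * (y - x0) - u y) (num' x).
  rewrite inE /= => -[_ /eqP /negbTE xx0]; rewrite /num' xx0.
  have := is_deriveB (is_deriveM (du1 x) (is_derive_subr_cst x0 x)) (du x).
  move/is_derive_eq; apply.
  by rewrite /GRing.scale /=; ring.
have dden x : x \in `]x0 - 1, x0 + 1[ `\ x0 ->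
    is_derive x (1 : R) (fun y => (y - x0) ^+ 2) (den' x).
  rewrite inE /= => -[_ /eqP /negbTE xx0]; rewrite /den' xx0.
  have := is_deriveX 2 (is_derive_subr_cst x0 x).
  move/is_derive_eq; apply.
  by rewrite /GRing.scale /=; ring.
have num0 : (u1 x * (x - x0) - u x) @[x --> x0] --> 0.
  rewrite -[0](subrr 0) -{2}u0 -[X in X - _](mulr0 (u1 x0)).
  apply: cvgB; last exact: is_derive_continuous (du x0).
  by apply: cvgM; [exact: is_derive_continuous (du1 x0) | exact: cvg_subr_cst].
have den0 : ((x - x0) ^+ 2) @[x --> x0] --> 0.
  under eq_fun do rewrite expr2.
  by rewrite -[0](mulr0 0); apply: cvgM; exact: cvg_subr_cst.
have den'_neq0 x : x \in `]x0 - 1, x0 + 1[ `\ x0 -> den' x != 0.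
  rewrite inE /= => -[_ /eqP /negbTE xx0]; rewrite /den' xx0.
  by rewrite mulf_eq0 negb_or subr_eq0 xx0 pnatr_eq0.
apply: (lhopital (mem_itv_center x0) dnum dden num0 den0 den'_neq0).
have -> : (fun x => num' x / den' x) = (fun x => u2 x / 2).
  apply/funext => x; rewrite /num' /den'; case: eqP => [-> // | /eqP xx0].
  by rewrite invfM mulrACA divff ?mulr1 // subr_eq0.
by apply: cvgM; [exact: cu2 | exact: cvg_cst].
Qed.

End DifferenceQuotients.

Lemma wronskian_quotient_rescale {R : realType} (h : R) {u u1 w w1 : R} : h != 0 ->
  (u * w1 - w * u1) / (u ^+ 2 + w ^+ 2) =
  ((u / h) * ((w1 * h - w) / h ^+ 2) - (w / h) * ((u1 * h - u) / h ^+ 2)) /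
  ((u / h) ^+ 2 + (w / h) ^+ 2).
Proof.
move=> h0.
have -> : (u / h) * ((w1 * h - w) / h ^+ 2) - (w / h) * ((u1 * h - u) / h ^+ 2)
   = (u * w1 - w * u1) / h ^+ 2 by field.
have -> : (u / h) ^+ 2 + (w / h) ^+ 2 = (u ^+ 2 + w ^+ 2) / h ^+ 2 by field.
by rewrite invf_div mulrA divfK // expf_neq0.
Qed.

Lemma cvg_wronskian_quotient_at_simple_zero {R : realType}
    {u u1 u2 w w1 w2 : R -> R} {x0 : R} :
  (forall x, is_derive x (1 : R) u (u1 x)) -> (forall x, is_derive x (1 : R) u1 (u2 x)) ->
  (forall x, is_derive x (1 : R) w (w1 x)) -> (forall x, is_derive x (1 : R) w1 (w2 x)) ->
  {for x0, continuous u2} -> {for x0, continuous w2} ->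
  u x0 = 0 -> w x0 = 0 -> u1 x0 ^+ 2 + w1 x0 ^+ 2 != 0 ->
  ((u x * w1 x - w x * u1 x) / (u x ^+ 2 + w x ^+ 2)) @[x --> x0^'] -->
    (u1 x0 * w2 x0 - w1 x0 * u2 x0) / (2 * (u1 x0 ^+ 2 + w1 x0 ^+ 2)).
Proof.
move=> du du1 dw dw1 cu2 cw2 u0 w0 nz.
have pu := cvg_first_order_quotient du u0 (is_derive_continuous (du1 x0)).
have pw := cvg_first_order_quotient dw w0 (is_derive_continuous (dw1 x0)).
have ru := cvg_second_order_quotient du u0 du1 cu2.
have rw := cvg_second_order_quotient dw w0 dw1 cw2.
have -> : (u1 x0 * w2 x0 - w1 x0 * u2 x0) / (2 * (u1 x0 ^+ 2 + w1 x0 ^+ 2)) =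
    (u1 x0 * (w2 x0 / 2) - w1 x0 * (u2 x0 / 2)) / (u1 x0 ^+ 2 + w1 x0 ^+ 2).
  by field; rewrite nz.
pose quot x := (u x / (x - x0)) * ((w1 x * (x - x0) - w x) / (x - x0) ^+ 2)
  - (w x / (x - x0)) * ((u1 x * (x - x0) - u x) / (x - x0) ^+ 2).
pose norm x := (u x / (x - x0)) ^+ 2 + (w x / (x - x0)) ^+ 2.
apply: (@cvg_trans _ ((fun x => quot x / norm x) @ x0^')).
  apply: near_eq_cvg; near=> x.
  rewrite /= (wronskian_quotient_rescale (x - x0)) // subr_eq0.
  by near: x; exact: nbhs_dnbhs_neq.
apply: cvgM; first by rewrite /quot; apply: cvgB; apply: cvgM.
apply: cvgV; first exact: nz.
rewrite /norm !expr2; under eq_fun do rewrite !expr2.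
by apply: cvgD; apply: cvgM.
Unshelve. all: by end_near.
Qed.

Lemma Ck2_le {R : realType} {j k : nat} {F : R -> R -> R} :
  (j <= k)%N -> Ck2 k F -> Ck2 j F.
Proof.
move=> jk Fk s sj; have [Fc Fd] := Fk s (leq_trans sj jk).
by split=> // sj'; apply: Fd; exact: leq_trans sj' jk.
Qed.

Lemma Ck2_slice_dx {R : realType} {F : R -> R -> R} (w0 : R) : Ck2 2 F ->
  [/\ forall x, is_derive x (1 : R) (fun y => F y w0) (pdx F x w0),
      forall x, is_derive x (1 : R) (fun y => pdx F y w0) (pdx (pdx F) x w0) &
      continuous (fun y => pdx (pdx F) y w0)].
Proof.
move=> F2; split.
- move=> x; have [_ /(_ isT x w0) [dF _]] := F2 [::] isT.
  by rewrite /pdx derive1E; apply: derivableP.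
- move=> x; have [_ /(_ isT x w0) [dF _]] := F2 [:: true] isT.
  by rewrite {2}/pdx derive1E; apply: derivableP.
- move=> x; have [cF _] := F2 [:: true; true] isT.
  have slice : {for x, continuous (fun y : R => (y, w0))}.
    exact: (@cvg_pair _ _ _ _ (nbhs x) (nbhs w0) _ _ _ id (fun=> w0) cvg_id (cvg_cst w0)).
  exact: (continuous_comp slice (cF (x, w0))).
Qed.

Lemma det2_neq0_col_norm_neq0 {R : realType} {a b c d : R} :
  a * d - b * c != 0 -> a ^+ 2 + c ^+ 2 != 0.
Proof.
apply: contra => /eqP sq0.
have a0 : a = 0 by nra.
have c0 : c = 0 by nra.
by rewrite a0 c0 !mul0r mulr0 subr0.
Qed.

Theorem mainTheorem6 (R : realType) (fr fi gr gi : R -> R) (x0 w0 : R) :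
  L2c fr fi -> L2c gr gi ->
  Ck2 3 (stftU fr fi gr gi) -> Ck2 3 (stftW fr fi gr gi) ->
  stftU fr fi gr gi x0 w0 = 0 -> stftW fr fi gr gi x0 w0 = 0 ->
  pdx (stftU fr fi gr gi) x0 w0 * pdw (stftW fr fi gr gi) x0 w0
    - pdw (stftU fr fi gr gi) x0 w0 * pdx (stftW fr fi gr gi) x0 w0 != 0 ->
  exists c : R,
    (fun x => phase_dx (stftU fr fi gr gi) (stftW fr fi gr gi) x w0)
      @ x0^' --> c.
Proof.
move=> _ _ U3 W3 U0 W0 det.
set U := stftU fr fi gr gi in U3 U0 det *.
set W := stftW fr fi gr gi in W3 W0 det *.
have [dU dU1 cU2] := Ck2_slice_dx w0 (Ck2_le (isT : (2 <= 3)%N) U3).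
have [dW dW1 cW2] := Ck2_slice_dx w0 (Ck2_le (isT : (2 <= 3)%N) W3).
have nz := det2_neq0_col_norm_neq0 det.
have lim := cvg_wronskian_quotient_at_simple_zero dU dU1 dW dW1
  (cU2 x0) (cW2 x0) U0 W0 nz.
by eexists; exact lim.
Qed.
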